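(* Let $n\ge2$ and let $v_A=(a_1,\dots,a_n)$ be the vector associated to a positive integral diamond $A$ of Dynkin type $\mathbb{A}_n$ with $a_n=1$, such that $(T_1(v_A),\dots,T_n(v_A))$ defines a Dyck path in $\mathfrak{D}_{2(n+1)}$. Then for each $1\le i<n$, the vector $(T_1(v_{A+i}),\dots,T_n(v_{A+i}))$ also defines a Dyck path in $\mathfrak{D}_{2(n+1)}$, where $v_{A+i}=(a_1,\dots,a_i,\,a_i+a_{i+1},\,a_{i+1},\dots,a_{n-1})$.
   Context: An $\mathbb{A}_n$-diamond over an integral domain $\mathbf{R}$ is a family $A=(a_{i,j})$ of elements of $\mathbf{R}$, with $a_{1,j}$ for $1\le j\le n+1$ and $a_{2,j}$ for $0\le j\le n$, such that (D1) $a_{2,0}=a_{1,n+1}=1$ and (D2) $a_{1,j}a_{2,j}-a_{2,j-1}a_{1,j+1}=1$ for $1\le j\le n$. For $\mathbf{R}=\mathbb{Z}$, $A$ is a positive integral diamond of Dynkin type $\mathbb{A}_n$ if it also satisfies (D3): there are integers $a,m_a$ with $1\le a\le\lfloor (n+2)/2\rfloor$ such that either $(a_{1,1},a_{2,1})=(a,a+m_a)$ or $(a_{1,1},a_{2,1})=(a+m_a,a)$, and $a_{1,2}=a^2+am_a-1$, where $1\le m_1\le n$ when $a=1$ and $0\le m_a\le n+2(1-a)$ when $a>1$. The vector associated to $A$ is $v_A=(a_{1,1},\dots,a_{1,n})$. A Dyck path of length $2N$ is a word in $U,D$ with $N$ of each letter such that every prefix has at least as many $U$'s as $D$'s; $\mathfrak{D}_{2N}$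 is their set. For $G\in\mathfrak{D}_{2(n+1)}$ let $m_i$ be the number of $U$'s before the $i$-th $D$ and $v_G=(m_1,m_2-1,\dots,m_n-n+1)$; a vector $w\in\mathbb{Z}^n$ defines a Dyck path in $\mathfrak{D}_{2(n+1)}$ if $w=v_G$ for some $G\in\mathfrak{D}_{2(n+1)}$. For $u=(u_1,\dots,u_m)\in\mathbb{N}^m$ and $1\le i\le m$: put $r_0=u_i$; while some $l\in\{1,\dots,i\}$ has $r_k-u_l>0$, let $l_k$ be the largest such $l$ and $r_{k+1}=r_k-u_{l_k}$; if this stops at $r_t$ after $t\ge0$ steps, $T_i(u)=r_t+t$. *)

From HB Require Import structures.
From mathcomp Require Import all_boot all_order all_algebra.
Set Implicit Arguments. Unset Strict Implicit. Unset Printing Implicit Defensive.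
Import Order.TTheory GRing.Theory Num.Theory.
Local Open Scope ring_scope.

(* a1 j = a_{1,j} (meaningful for 1 <= j <= n+1), a2 j = a_{2,j} (0 <= j <= n). *)
Definition is_diamond (n : nat) (a1 a2 : nat -> int) : Prop :=
  a2 0%N = 1 /\ a1 n.+1 = 1 /\
  (forall j : nat, (1 <= j <= n)%N -> a1 j * a2 j - a2 j.-1 * a1 j.+1 = 1).

Definition D3 (n : nat) (a1 a2 : nat -> int) : Prop :=
  exists a m : int,
    [/\ 1 <= a /\ a <= ((n + 2) %/ 2)%N%:Z,
        (a1 1%N, a2 1%N) = (a, a + m) \/ (a1 1%N, a2 1%N) = (a + m, a),
        a1 2%N = a ^+ 2 + a * m - 1,
        (a = 1 -> 1 <= m /\ m <= n%:Z) &
        (1 < a -> 0 <= m /\ m <= n%:Z + 2 * (1 - a))].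

Definition pos_int_diamond (n : nat) (a1 a2 : nat -> int) : Prop :=
  is_diamond n a1 a2 /\ D3 n a1 a2.

Definition vecA (n : nat) (a1 : nat -> int) : seq int := [seq a1 j | j <- iota 1 n].

Definition vecAplus (n i : nat) (a1 : nat -> int) : seq int :=
  [seq a1 j | j <- iota 1 i] ++ (a1 i + a1 i.+1)
    :: [seq a1 j | j <- iota i.+1 (n.-1 - i)].

(* u is 1-indexed: u_l = nth 0 u l.-1.  cands u i r = the l in {1..i} with
   r - u_l > 0, in increasing order (so the largest one is the last). *)
Definition cands (u : seq int) (i : nat) (r : int) : seq nat :=
  [seq l <- iota 1 i | 0 < r - nth 0 u l.-1].

(* Trun u i r t res : the process started at (r_k = r) after t steps stops,
   producing res = r_final + (number of steps). *)
Inductive Trun (u : seq int) (i : nat) : int -> nat -> int -> Prop :=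
| Trun_stop r t : cands u i r = [::] -> Trun u i r t (r + t%:Z)
| Trun_step r t res : cands u i r != [::] ->
    Trun u i (r - nth 0 u (last 0%N (cands u i r)).-1) t.+1 res ->
    Trun u i r t res.

Definition T_is (u : seq int) (i : nat) (res : int) : Prop :=
  Trun u i (nth 0 u i.-1) 0 res.

Definition T_vec (u : seq int) (n : nat) (ts : seq int) : Prop :=
  size ts = n /\ forall k : nat, (1 <= k <= n)%N -> T_is u k (nth 0 ts k.-1).

(* A word in U (true), D (false). *)
Definition dyck (N : nat) (w : seq bool) : Prop :=
  [/\ size w = (2 * N)%N, count id w = N, count negb w = N &
      forall k : nat, (count negb (take k w) <= count id (take k w))%N].

(* position (0-based) of the i-th D (i >= 1) *)
Definition posD (w : seq bool) (i : nat) : nat :=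
  nth 0%N [seq j <- iota 0 (size w) | ~~ nth true w j] i.-1.

Definition mU (w : seq bool) (i : nat) : nat := count id (take (posD w i) w).

Definition vecG (n : nat) (w : seq bool) : seq int :=
  [seq (mU w k)%:Z - (k.-1)%:Z | k <- iota 1 n].

Definition defines_dyck (n : nat) (v : seq int) : Prop :=
  exists G : seq bool, dyck n.+1 G /\ v = vecG n G.

From HB Require Import structures.
From mathcomp Require Import all_boot all_order all_algebra zify.
Import Order.TTheory GRing.Theory Num.Theory.
Local Open Scope ring_scope.

(* T_i(u) depends only on the prefix (u_1, ..., u_i): each step subtracts from
   the current value r the last entry of the prefix lying below r.  Since T_n(v_A)
   starts from a_n = 1, all a_j are positive.  Compare the prefixes of v_{A+i}
   with those of v_A.  Up to length i they coincide.  At length i+1, the first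
   step from a_i + a_{i+1} subtracts a_i; from then on r <= a_{i+1}, so the last
   entry never matters and the run is that of T_{i+1}(v_A), one step longer.
   Beyond that, the inserted entry a_i + a_{i+1} is never the last one below r,
   because the smaller a_{i+1} follows it.  Hence
   T(v_{A+i}) = (T_1, ..., T_i, T_{i+1} + 1, T_{i+1}, ..., T_{n-1}), and the
   Dyck conditions T_k >= 1, T_k <= T_{k+1} + 1, T_n = 1 carry over. *)

(* In the definition of T_i, with s = (u_1, ..., u_i): [lastlt s r_k] is
   [Some u_{l_k}], or [None] when the process stops at r_k. *)
Definition lastlt (s : seq int) (r : int) : option int :=
  ohead (rev [seq x <- s | x < r]).

Lemma lastlt_cat s1 s2 r :
  lastlt (s1 ++ s2) r = if lastlt s2 r is Some d then Some d else lastlt s1 r.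
Proof. by rewrite /lastlt filter_cat rev_cat; case: (rev _). Qed.

Lemma lastlt_rcons s x r :
  lastlt (rcons s x) r = if x < r then Some x else lastlt s r.
Proof. by rewrite -cats1 lastlt_cat /lastlt /=; case: ifP. Qed.

Lemma lastlt_None s r : (lastlt s r == None) = all (fun x => r <= x) s.
Proof.
rewrite /lastlt; case/lastP E: [seq x <- s | x < r] => [|f x] /=.
- apply/esym/allP => x xs; rewrite leNgt; apply/negP => xr.
  by have := mem_filter (fun x => x < r) x s; rewrite E xs xr.
- rewrite rev_rcons /=; apply/esym/negbTE; rewrite -has_predC; apply/hasP.
  have : x \in [seq x <- s | x < r] by rewrite E mem_rcons mem_head.
  by rewrite mem_filter => /andP[xr xs]; exists x => //=; rewrite -ltNge.
Qed.

Lemma lastlt_Some {s r d} : lastlt s r = Some d -> d \in s /\ d < r.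
Proof.
rewrite /lastlt => E; have : d \in rev [seq x <- s | x < r].
  by case: (rev _) E => //= x ? [<-]; rewrite mem_head.
by rewrite mem_rev mem_filter => /andP[].
Qed.

Lemma lastlt_take_cands u p r : (p <= size u)%N ->
  lastlt (take p u) r =
  if cands u p r is [::] then None else Some (nth 0 u (last 0%N (cands u p r)).-1).
Proof.
move=> p_le; have take_pu : take p u = [seq nth 0 u l.-1 | l <- iota 1 p].
  by rewrite -(map_nth_iota0 0 p_le) (iotaDl 1 0) -map_comp.
rewrite /lastlt; have -> : [seq x <- take p u | x < r] = [seq nth 0 u l.-1 | l <- cands u p r].
  by rewrite take_pu filter_map; apply/congr1/eq_filter => l /=; rewrite subr_gt0.
case/lastP: (cands u p r) => [|c l] //.
by rewrite map_rcons rev_rcons last_rcons; case: c.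
Qed.

Inductive run (s : seq int) : int -> nat -> int -> Prop :=
| run_stop r t : lastlt s r = None -> run s r t (r + t%:Z)
| run_step r t d res : lastlt s r = Some d -> run s (r - d) t.+1 res -> run s r t res.

Definition T_last (s : seq int) (res : int) : Prop := run s (last 0 s) 0 res.

Lemma Trun_run u p r t res : (p <= size u)%N ->
  Trun u p r t res <-> run (take p u) r t res.
Proof.
move=> p_le; split; elim=> {r t res}.
- by move=> r t stop; apply: run_stop; rewrite lastlt_take_cands // stop.
- move=> r t res nonstop _; apply: run_step; rewrite lastlt_take_cands //.
  by case: (cands u p r) nonstop.
- move=> r t; rewrite lastlt_take_cands //.
  by case E: (cands u p r) => [|//] _; apply: Trun_stop.
- move=> r t d res; rewrite lastlt_take_cands //.
  by case E: (cands u p r) => [|c cs] //= [<-] _ IH; apply: Trun_step; rewrite E.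
Qed.

Lemma T_is_T_last u k res : (0 < k <= size u)%N -> T_is u k res <-> T_last (take k u) res.
Proof.
case: k => [//|k] /= k_lt; rewrite /T_is /T_last Trun_run //.
by rewrite (take_nth 0 k_lt) last_rcons.
Qed.

Lemma run_transfer s s' (P : int -> Prop) :
  (forall r, P r -> lastlt s' r = lastlt s r) ->
  (forall r d, P r -> lastlt s r = Some d -> P (r - d)) ->
  forall r t res, P r -> run s r t res -> run s' r t res.
Proof.
move=> same_step inv r t res + Hrun.
elim: Hrun => {r t res} [r t stop|r t d res step _ IH] Pr.
- by apply: run_stop; rewrite same_step.
- by apply: (@run_step _ _ _ d); [rewrite same_step | apply: IH; apply: inv Pr step].
Qed.

Lemma run_shift {s r t res} t' : run s r t res -> run s r (t + t') (res + t'%:Z).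
Proof.
elim=> {r t res} [r t stop|r t d res step _ IH]; last exact: run_step step IH.
by rewrite -addrA -PoszD; apply: run_stop.
Qed.

Lemma run_stopE {s r t res} : lastlt s r = None -> run s r t res -> res = r + t%:Z.
Proof. by move=> + Hrun; case: Hrun => // r' t' d res' ->. Qed.

Lemma run_gt0 {s r t res} : 0 < r -> run s r t res -> 0 < res.
Proof.
move=> + Hrun; elim: Hrun => {r t res} [r t _ r_gt0|r t d res step _ IH r_gt0].
- by apply: ltr_wpDr.
- by apply: IH; rewrite subr_gt0; case: (lastlt_Some step).
Qed.

Lemma run_all_gt0 {s r t res} : 0 < r -> run s r t res -> all (fun x => 0 < x) s.
Proof.
move=> + Hrun; elim: Hrun => {r t res} [r t stop r_gt0|r t d res step _ IH r_gt0].
- apply/allP => x xs; move/eqP: stop; rewrite lastlt_None => /allP/(_ x xs).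
  exact: lt_le_trans.
- by apply: IH; rewrite subr_gt0; case: (lastlt_Some step).
Qed.

Lemma lastlt_rcons_ge (s : seq int) (c r : int) :
  r <= c -> lastlt (rcons s c) r = lastlt s r.
Proof. by rewrite lastlt_rcons ltNge => ->. Qed.

Lemma lastlt_cons_ge (s : seq int) (b c r : int) :
  b <= c -> lastlt (c :: b :: s) r = lastlt (b :: s) r.
Proof.
move=> bc; rewrite -cat1s lastlt_cat; case E: (lastlt (b :: s) r) => [//|].
move/eqP: E; rewrite lastlt_None /= => /andP[rb _].
by rewrite /lastlt /= ltNge (le_trans rb bc).
Qed.

Lemma run_rcons_ge (s : seq int) (c r : int) t res :
  all (fun x => 0 <= x) s -> r <= c -> run (rcons s c) r t res <-> run s r t res.
Proof.
move=> /allP s_ge0 rc; have shrink r' d : lastlt s r' = Some d -> r' - d <= r'.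
  by case/lastlt_Some=> /s_ge0 d_ge0 _; rewrite gerBl.
split; apply: (@run_transfer _ _ (fun r => r <= c)) => //.
- by move=> r' r'c; rewrite lastlt_rcons_ge.
- by move=> r' d r'c; rewrite lastlt_rcons_ge // => /shrink /le_trans; apply.
- by move=> r' r'c; rewrite lastlt_rcons_ge.
- by move=> r' d r'c /shrink /le_trans; apply.
Qed.

Lemma T_last_rcons_add (s : seq int) (a b res : int) :
  all (fun x => 0 <= x) (rcons s a) -> 0 < b ->
  T_last (rcons (rcons s a) b) res -> T_last (rcons (rcons s a) (a + b)) (res + 1).
Proof.
rewrite /T_last !last_rcons => s_ge0 b_gt0.
have a_ge0 : 0 <= a by move/allP: s_ge0; apply; rewrite mem_rcons mem_head.
have b_le : b <= a + b by rewrite lerDr.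
rewrite run_rcons_ge // => /(run_shift 1) /(run_rcons_ge _ _ _ _ _ s_ge0 b_le).
move=> run_b; apply: (@run_step _ _ _ a); first by rewrite !lastlt_rcons ltxx ltrDl b_gt0.
by rewrite addrAC subrr add0r.
Qed.

Lemma T_last_insert_ge (s y : seq int) (b c res : int) : b <= c ->
  T_last (s ++ b :: y) res -> T_last (s ++ c :: b :: y) res.
Proof.
rewrite /T_last !last_cat /= => bc; apply: (@run_transfer _ _ (fun=> True)) => // r _.
by rewrite !lastlt_cat lastlt_cons_ge.
Qed.

Definition Dpositions (w : seq bool) : seq nat :=
  [seq j <- iota 0 (size w) | ~~ nth true w j].

Lemma size_Dpositions w : size (Dpositions w) = count negb w.
Proof.
rewrite /Dpositions size_filter -count_map.
by rewrite -/(mkseq _ _) mkseq_nth.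
Qed.

Lemma Dpositions_block d w :
  Dpositions (nseq d true ++ false :: w) = d :: map (addn d.+1) (Dpositions w).
Proof.
rewrite /Dpositions size_cat size_nseq /= iotaD filter_cat add0n.
have -> : [seq j <- iota 0 d | ~~ nth true (nseq d true ++ false :: w) j] = [::].
  apply/eqP; rewrite -(negbK (_ == _)) -has_filter; apply/hasPn => j.
  by rewrite mem_iota add0n /= nth_cat size_nseq => jd; rewrite jd nth_nseq jd.
rewrite /= nth_cat size_nseq ltnn subnn /= -[d.+1]addn0 iotaDl filter_map addn0.
congr (_ :: map _ _); apply: eq_filter => j /=.
by rewrite nth_cat size_nseq ltnNge addSnnS leq_addr /= addnC addnK.
Qed.

Lemma mU_block1 d w : mU (nseq d true ++ false :: w) 1 = d.
Proof.
rewrite /mU /posD -/(Dpositions _) Dpositions_block /= take_size_cat ?size_nseq //.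
by rewrite count_nseq mul1n.
Qed.

Lemma mU_blockS d w k : (k < count negb w)%N ->
  mU (nseq d true ++ false :: w) k.+2 = (d + mU w k.+1)%N.
Proof.
move=> k_lt; rewrite /mU /posD -!/(Dpositions _) Dpositions_block /=.
rewrite (nth_map 0%N) ?size_Dpositions // take_cat size_nseq ltnNge addSnnS leq_addr /=.
by rewrite addnC addnK count_cat count_nseq mul1n.
Qed.

Fixpoint dyck_word (m : nat -> nat) (j N : nat) : seq bool :=
  if N is N'.+1 then nseq (m j.+1 - m j) true ++ false :: dyck_word m j.+1 N' else [::].

Section DyckWord.
Variable m : nat -> nat.
Hypothesis m_nondecr : forall x, (m x <= m x.+1)%N.

Let m_le : {homo m : x y / (x <= y)%N}.
Proof. exact: homo_leq leqnn leq_trans m_nondecr. Qed.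

Lemma count_negb_dyck_word j N : count negb (dyck_word m j N) = N.
Proof. by elim: N j => [|N IH] j //=; rewrite count_cat count_nseq /= IH. Qed.

Lemma count_id_dyck_word j N : count id (dyck_word m j N) = (m (j + N) - m j)%N.
Proof.
elim: N j => [|N IH] j /=; first by rewrite addn0 subnn.
rewrite count_cat count_nseq /= IH mul1n addSn addnS.
have /m_le : (j.+1 <= (j + N).+1)%N by lia.
have := m_nondecr j; lia.
Qed.

Lemma size_dyck_word j N : size (dyck_word m j N) = (m (j + N) - m j + N)%N.
Proof.
rewrite -(count_predC id) count_id_dyck_word; congr addn.
by rewrite -[RHS](count_negb_dyck_word j N); apply: eq_count.
Qed.

Lemma mU_dyck_word j N k :
  (0 < k <= N)%N -> mU (dyck_word m j N) k = (m (j + k) - m j)%N.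
Proof.
elim: N j k => [|N IH] j [|[|k]] k_le //=; first by rewrite mU_block1 addn1.
rewrite mU_blockS ?count_negb_dyck_word // IH // addSn !addnS.
have /m_le : (j.+1 <= (j + k).+2)%N by lia.
have := m_nondecr j; lia.
Qed.

Lemma dyck_word_prefix j N c :
  (forall x, (0 < x <= N)%N -> (x <= c + (m (j + x) - m j))%N) ->
  forall k, let w := take k (dyck_word m j N) in (count negb w <= c + count id w)%N.
Proof.
elim: N j c => [|N IH] j c heights k /=; first by case: k.
rewrite take_cat size_nseq; case: ltnP => k_le.
  by rewrite take_nseq ?count_nseq //=; lia.
have h1 := heights 1%N isT; rewrite addn1 in h1.
case E: (k - (m j.+1 - m j))%N => [|k']; first by rewrite take0 cats0 count_nseq /=; lia.
have heightsS x : (0 < x <= N)%N ->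
    (x <= (c + (m j.+1 - m j)).-1 + (m (j.+1 + x) - m j.+1))%N.
  move=> x_le; have := heights x.+1; rewrite addnS -addSn.
  have /m_le : (j.+1 <= j.+1 + x)%N by lia.
  have := m_nondecr j; lia.
have := IH j.+1 _ heightsS k'.
rewrite /= !count_cat !count_nseq /= !mul1n; lia.
Qed.
End DyckWord.

Lemma defines_dyck_heights n (m : nat -> nat) :
  m 0%N = 0%N -> m n.+1 = n.+1 -> (forall x, (m x <= m x.+1)%N) ->
  (forall x, (x <= n.+1)%N -> (x <= m x)%N) ->
  defines_dyck n [seq (m k)%:Z - (k.-1)%:Z | k <- iota 1 n].
Proof.
move=> m0 mn m_nondecr m_ge; exists (dyck_word m 0 n.+1); split.
  split.
  - by rewrite size_dyck_word // add0n mn m0 subn0 mul2n addnn.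
  - by rewrite count_id_dyck_word // add0n mn m0.
  - by rewrite count_negb_dyck_word.
  - move=> k; rewrite -[X in (_ <= X)%N]add0n; apply: dyck_word_prefix => // x x_le.
    by rewrite add0n m0 subn0 m_ge //; lia.
rewrite /vecG; apply/eq_in_map => k; rewrite mem_iota => k_le.
by rewrite mU_dyck_word ?add0n ?m0 ?subn0 //; lia.
Qed.

Lemma count_take_le (a : pred bool) (s : seq bool) p q : (p <= q)%N ->
  (count a (take p s) <= count a (take q s))%N.
Proof.
move=> pq; rewrite -(take_takel s pq).
by rewrite -[X in (_ <= count _ X)%N](cat_take_drop p) count_cat leq_addr.
Qed.

Lemma mU_le w k : (0 < k < count negb w)%N -> (mU w k <= mU w k.+1)%N.
Proof.
case/andP=> k_gt0 k_lt; rewrite /mU /posD -!/(Dpositions _); apply: count_take_le.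
have sorted_D : sorted ltn (Dpositions w).
  exact: sorted_filter ltn_trans _ _ (iota_ltn_sorted 0 _).
apply/ltnW/(sorted_ltn_nth ltn_trans 0%N sorted_D); rewrite ?inE ?size_Dpositions; lia.
Qed.

Lemma defines_dyck_le n v : defines_dyck n v ->
  forall k, (0 < k < n)%N -> nth 0 v k.-1 <= nth 0 v k + 1.
Proof.
case=> G [[_ _ countD _] ->] k k_le; rewrite /vecG !(nth_map 0%N) ?size_iota; try lia.
rewrite !nth_iota; try lia.
rewrite !add1n prednK; last lia.
have := mU_le G k; rewrite countD; lia.
Qed.

Definition dyck_profile (n : nat) (g : nat -> int) : Prop :=
  [/\ forall k, (0 < k <= n)%N -> 0 < g k,
      forall k, (0 < k < n)%N -> g k <= g k.+1 + 1
    & g n + (n.-1)%:Z <= (n.+1)%:Z].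

Lemma defines_dyck_profile n g :
  dyck_profile n g -> defines_dyck n [seq g k | k <- iota 1 n].
Proof.
case=> g_gt0 g_le g_last.
(* [m x] is the number of U's before the x-th D. *)
pose m x := if x == 0%N then 0%N else if (x <= n)%N then (`|g x| + x.-1)%N else n.+1.
have -> : [seq g k | k <- iota 1 n] = [seq (m k)%:Z - (k.-1)%:Z | k <- iota 1 n].
  apply/eq_in_map => k; rewrite mem_iota => k_le; have := g_gt0 k.
  by rewrite /m ifN_eq ?ifT; lia.
apply: defines_dyck_heights => [|||x x_le]; rewrite /m //=.
- by rewrite ltnn.
- move=> x; case: eqP => [//|x_gt0]; have [x_lt|x_ge] := ltnP x n.
    rewrite (ltnW x_lt).
    have := g_le x; have := g_gt0 x; have := g_gt0 x.+1; lia.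
  case: (leqP x n) => // x_le.
  have := g_gt0 n; have x_n : x = n by lia.
  rewrite x_n; lia.
- by case: eqP => // x_gt0; case: (leqP x n) => // x_n; have := g_gt0 x; lia.
Qed.

Definition vecTplus (i : nat) (t : nat -> int) (k : nat) : int :=
  if (k <= i)%N then t k else if k == i.+1 then t k + 1 else t k.-1.

Lemma dyck_profile_vecTplus n i (t : nat -> int) : (0 < i < n)%N ->
  (forall k, (0 < k <= n)%N -> 0 < t k) ->
  (forall k, (0 < k < n)%N -> t k <= t k.+1 + 1) ->
  t n = 1 -> dyck_profile n (vecTplus i t).
Proof.
move=> i_lt t_gt0 t_le t_n; rewrite /vecTplus; split.
- move=> k k_le; case: leqP => [_|k_gt]; first exact: t_gt0.
  by case: eqP => [->|_]; [have := t_gt0 i.+1 | have := t_gt0 k.-1]; lia.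
- move=> k k_lt; case: (ltngtP k i) => [k_lt_i|k_gt_i|->].
  + by apply: t_le; lia.
  + rewrite eqSS (gtn_eqF k_gt_i) /=.
    have [->|k_ne] := eqP; first by rewrite /=; lia.
    by have := t_le k.-1; rewrite prednK; lia.
  + by rewrite eqxx; have := t_le i; lia.
- case: leqP => [|_]; first lia.
  case: eqP => [n_eq|n_ne]; first by rewrite t_n; lia.
  have := t_le n.-1; rewrite prednK; lia.
Qed.

Lemma size_vecA n a1 : size (vecA n a1) = n.
Proof. by rewrite size_map size_iota. Qed.

Lemma take_vecA {k n} a1 : (k <= n)%N -> take k (vecA n a1) = vecA k a1.
Proof. by move=> k_le; rewrite -map_take take_iota (minn_idPl k_le). Qed.

Lemma vecAD i j a1 : vecA (i + j) a1 = vecA i a1 ++ [seq a1 l | l <- iota i.+1 j].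
Proof. by rewrite /vecA iotaD map_cat add1n. Qed.

Lemma vecAS k a1 : vecA k.+1 a1 = rcons (vecA k a1) (a1 k.+1).
Proof. by rewrite -cats1 -{1}(addn1 k) vecAD. Qed.

Lemma take_vecAplus_le n i k a1 : (k <= i)%N -> take k (vecAplus n i a1) = vecA k a1.
Proof.
move=> k_le; rewrite /vecAplus -/(vecA i a1) take_cat size_vecA.
case: ltnP => [k_lt|k_ge]; first by rewrite take_vecA.
by rewrite (@anti_leq k i) ?k_le // subnn cats0.
Qed.

Lemma take_vecAplus_gt n i j a1 : (j <= n.-1 - i)%N ->
  take (i.+1 + j) (vecAplus n i a1) =
  vecA i a1 ++ (a1 i + a1 i.+1) :: [seq a1 l | l <- iota i.+1 j].
Proof.
move=> j_le; rewrite /vecAplus -/(vecA i a1) take_cat size_vecA.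
have -> : (i.+1 + j < i)%N = false by lia.
have -> : (i.+1 + j - i = j.+1)%N by lia.
by rewrite /= -map_take take_iota (minn_idPl j_le).
Qed.

Lemma T_last_vecAplus n i a1 (t : nat -> int) : (0 < i < n)%N ->
  all (fun x => 0 < x) (vecA n a1) ->
  (forall k, (0 < k <= n)%N -> T_last (vecA k a1) (t k)) ->
  forall k, (0 < k <= n)%N -> T_last (take k (vecAplus n i a1)) (vecTplus i t k).
Proof.
move=> i_lt /allP a_gt0 T_A k k_le; rewrite /vecTplus.
have a1_gt0 l : (0 < l <= n)%N -> 0 < a1 l.
  by move=> l_le; apply/a_gt0/map_f; rewrite mem_iota; lia.
case: leqP => [k_le_i|k_gt_i]; first by rewrite take_vecAplus_le //; apply: T_A; lia.
have [j k_eq] : exists j, k = (i.+1 + j)%N by exists (k - i.+1)%N; lia.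
rewrite k_eq take_vecAplus_gt; last lia.
case: j k_eq => [|j] k_eq.
- rewrite addn0 eqxx cats1; case: i i_lt {k_le k_gt_i k_eq} T_A => // i i_lt T_A.
  rewrite vecAS; apply: T_last_rcons_add; last by rewrite -!vecAS; apply: T_A; lia.
  + rewrite -vecAS all_map; apply/allP => l; rewrite mem_iota => l_le.
    by apply/ltW/a1_gt0; lia.
  + by apply: a1_gt0; lia.
- rewrite ifN_eq; last lia.
  have -> : (i.+1 + j.+1).-1 = (i + j.+1)%N by lia.
  have iotaS : [seq a1 l | l <- iota i.+1 j.+1] = a1 i.+1 :: [seq a1 l | l <- iota i.+2 j].
    by [].
  rewrite iotaS; apply: T_last_insert_ge; first by rewrite lerDr; apply/ltW/a1_gt0; lia.
  by rewrite -iotaS -vecAD; apply: T_A; lia.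
Qed.

Section TvecA.
Variables (n : nat) (a1 : nat -> int) (ts : seq int).
Hypotheses (n_gt0 : (0 < n)%N) (an_1 : a1 n = 1) (T_ts : T_vec (vecA n a1) n ts).

Let t k := nth 0 ts k.-1.

Lemma T_last_vecA k : (0 < k <= n)%N -> T_last (vecA k a1) (t k).
Proof.
move=> k_le; have k_n : (k <= n)%N by lia.
by rewrite -(take_vecA a1 k_n) -T_is_T_last ?size_vecA //; apply: T_ts.2.
Qed.

Let run_vecA k : (0 < k <= n)%N -> run (vecA k a1) (a1 k) 0 (t k).
Proof.
move=> k_le; have := T_last_vecA k k_le; rewrite /T_last.
by case: k k_le => // k _; rewrite vecAS last_rcons.
Qed.

Lemma vecA_gt0 : all (fun x => 0 < x) (vecA n a1).
Proof. by apply: (run_all_gt0 _ (run_vecA n _)); rewrite ?an_1; lia. Qed.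

Lemma T_vecA_gt0 k : (0 < k <= n)%N -> 0 < t k.
Proof.
move=> k_le; apply: (run_gt0 _ (run_vecA k k_le)).
by move/allP: vecA_gt0; apply; apply/map_f; rewrite mem_iota; lia.
Qed.

Lemma T_vecA_last : t n = 1.
Proof.
have stop : lastlt (vecA n a1) (a1 n) = None.
  by apply/eqP; rewrite lastlt_None an_1; apply: sub_all vecA_gt0 => x.
by rewrite (run_stopE stop (run_vecA n _)) ?an_1 //; lia.
Qed.
End TvecA.

Theorem proposition14 (n : nat) (a1 a2 : nat -> int) :
  (2 <= n)%N ->
  pos_int_diamond n a1 a2 ->
  a1 n = 1 ->
  (exists ts : seq int, T_vec (vecA n a1) n ts /\ defines_dyck n ts) ->
  forall i : nat, (1 <= i < n)%N ->
    exists ts : seq int, T_vec (vecAplus n i a1) n ts /\ defines_dyck n ts.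
Proof.
move=> /ltnW n_gt0 _ an_1 [ts [T_ts dyck_ts]] i i_lt.
pose t k := nth 0 ts k.-1.
exists [seq vecTplus i t k | k <- iota 1 n]; split; last first.
  apply/defines_dyck_profile/dyck_profile_vecTplus => //.
  - exact: T_vecA_gt0 n_gt0 an_1 T_ts.
  - exact: defines_dyck_le dyck_ts.
  - exact: T_vecA_last n_gt0 an_1 T_ts.
split=> [|k k_le]; first by rewrite size_map size_iota.
rewrite T_is_T_last; last by rewrite /vecAplus size_cat /= !size_map !size_iota; lia.
rewrite (nth_map 0%N) ?size_iota ?nth_iota ?add1n ?prednK; try lia.
apply: T_last_vecAplus => //; first exact: vecA_gt0 n_gt0 an_1 T_ts.
exact: T_last_vecA T_ts.
Qed.
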